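(* Let $r\geq 2$. Then $Z_{+}(K_r\,\square\, K_r)=M_{+}(K_r\,\square\, K_r)=(r-1)^2+1$.
   Context: $K_r$ is the complete graph on $r$ vertices. The Cartesian product $G\,\square\, G'$ has vertex set $V(G)\times V(G')$, with $(g,g')$ adjacent to $(h,h')$ if and only if either $g=h$ and $\{g',h'\}\in E(G')$, or $g'=h'$ and $\{g,h\}\in E(G)$. The positive semidefinite zero forcing number $Z_{+}(G)$ is the minimum size of a set $S\subseteq V(G)$ such that, coloring $S$ blue and all other vertices white, repeated application of the following rule makes all vertices blue: a white vertex $v$ becomes blue if it is a neighbor of a blue vertex $u$ and no other white neighbor of $u$ is connected to $v$ by a path all of whose vertices are white. $M_{+}(G)$ is the maximum nullity over all real symmetric positive semidefinite $n\times n$ matrices $B=[b_{ij}]$ such that for $i\neq j$, $b_{ij}\neq 0$ if and only if $\{i,j\}$ is an edge of $G$ (diagonal entries unrestricted). *)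

From HB Require Import structures.
From mathcomp Require Import all_boot all_order all_algebra.
From mathcomp Require Import boolp reals.
Set Implicit Arguments. Unset Strict Implicit. Unset Printing Implicit Defensive.
Import Order.TTheory GRing.Theory Num.Theory.

(* A simple graph on a finite vertex type T is given by a symmetric,
   irreflexive adjacency relation e : rel T. *)

Definition complete_graph (r : nat) : rel 'I_r := fun x y => x != y.

Definition cart_prod (T1 T2 : finType) (e1 : rel T1) (e2 : rel T2)
  : rel (T1 * T2) :=
  fun p q => ((p.1 == q.1) && e2 p.2 q.2) || ((p.2 == q.2) && e1 p.1 q.1).

Section PSDForcing.
Variables (T : finType) (e : rel T).

(* adjacency restricted to white (non-blue) vertices, B = current blue set *)
Definition white_rel (B : {set T}) : rel T :=
  fun x y => [&& e x y, x \notin B & y \notin B].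

Definition can_force (B : {set T}) (u v : T) : bool :=
  [&& u \in B, e u v, v \notin B &
      [forall w, [&& w \notin B, e u w & w != v] ==>
                 ~~ connect (white_rel B) w v]].

Inductive derives (S : {set T}) : {set T} -> Prop :=
| derives_refl : derives S S
| derives_step B u v : derives S B -> can_force B u v -> derives S (v |: B).

Definition psd_forcing_set (S : {set T}) : Prop := derives S [set: T].

(* Z_+(G): minimum size of a PSD forcing set (setT is always one). *)
Definition Zplus : nat :=
  \big[minn/#|T|]_(S : {set T} | `[< psd_forcing_set S >]) #|S|.

(* M_+(G): maximum nullity of a real symmetric PSD matrix with pattern G;
   matrices are indexed by 'I_#|T| via the enumeration enum_val of T. *)
Definition psd_pattern_matrix (R : realType) (B : 'M[R]_#|T|) : Prop :=
  [/\ trmx B = B,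
      (forall x : 'cV[R]_#|T|, 0 <= (trmx x *m B *m x) 0 0)%R &
      (forall i j : 'I_#|T|, i != j ->
         (B i j != 0)%R = e (enum_val i) (enum_val j))].

Definition nullity (R : realType) (B : 'M[R]_#|T|) : nat := #|T| - \rank B.

Definition Mplus (R : realType) : nat :=
  \max_(k < #|T|.+1 |
        `[< exists B : 'M[R]_#|T|, psd_pattern_matrix B /\ nullity B = k >]) k.

End PSDForcing.

Arguments complete_graph : clear implicits.
Definition KrKr (r : nat) : rel ('I_r * 'I_r) :=
  cart_prod (complete_graph r) (complete_graph r).
Arguments KrKr : clear implicits.

(* Z_+ >= M_+ holds for every graph: if S is a PSD forcing set and B a PSD
   matrix with the graph's pattern, a null vector x of B vanishing on S
   vanishes everywhere.  Indeed, when a blue u forces a white v, restricting x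
   to the white component of v gives again a null vector (B is PSD and no edge
   leaves the component towards a white vertex), and its u-th entry is
   B_vu x_v, since v is the only neighbour of u in that component.
   For K_r [] K_r the set {(0,0)} u {(i,j) : i, j <> 0} of size (r-1)^2 + 1 is
   PSD forcing: the white vertices split into row 0 and column 0, which are
   not joined by white edges, and (r-1, j) forces (0, j), (i, r-1) forces
   (i, 0).  Conversely a Gram matrix of vectors in R^(2(r-1)) has the pattern
   of K_r [] K_r and nullity at least r^2 - 2(r-1) = (r-1)^2 + 1. *)

From mathcomp Require Import all_boot all_order all_algebra.
From mathcomp Require Import boolp reals.
From mathcomp Require Import zify ring lra.
Set Implicit Arguments. Unset Strict Implicit. Unset Printing Implicit Defensive.
Import Order.TTheory GRing.Theory Num.Theory.
Local Open Scope ring_scope.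

Lemma quad_ge0_lin_coef_eq0 (R : realFieldType) (a c : R) :
  0 <= c -> (forall t, 0 <= 2 * t * a + t ^+ 2 * c) -> a = 0.
Proof.
move=> c_ge0 q_ge0; have c1_gt0 : 0 < c + 1 by lra.
have := q_ge0 (- a / (c + 1)).
have -> : 2 * (- a / (c + 1)) * a + (- a / (c + 1)) ^+ 2 * c
          = - (a ^+ 2 * (c + 2)) / (c + 1) ^+ 2.
  by field; rewrite gt_eqF.
rewrite pmulr_lge0 ?invr_gt0 ?exprn_gt0 // oppr_ge0 => h.
by apply/eqP; rewrite -sqrf_eq0; nra.
Qed.

Section PsdMatrix.
Variables (R : realFieldType) (m : nat) (B : 'M[R]_m).
Hypothesis B_sym : B^T = B.
Hypothesis B_psd : forall x : 'rV[R]_m, 0 <= (x *m B *m x^T) 0 0.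

Lemma psd_form_sym (x y : 'rV[R]_m) : (x *m B *m y^T) 0 0 = (y *m B *m x^T) 0 0.
Proof.
have -> : x *m B *m y^T = (y *m B *m x^T)^T.
  by rewrite !trmx_mul trmxK B_sym mulmxA.
by rewrite mxE.
Qed.

Lemma psd_form_eq0 (y : 'rV[R]_m) : (y *m B *m y^T) 0 0 = 0 -> y *m B = 0.
Proof.
move=> y0; apply/rowP => j; rewrite [RHS]mxE.
pose d : 'rV[R]_m := delta_mx 0 j.
have dBd_ge0 := B_psd d.
suff /quad_ge0_lin_coef_eq0 : forall t : R,
    0 <= 2 * t * (y *m B *m d^T) 0 0 + t ^+ 2 * (d *m B *m d^T) 0 0.
  move/(_ dBd_ge0); rewrite mxE (bigD1 j) //= big1 ?addr0 => [|k kj].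
    by rewrite !mxE !eqxx mulr1.
  by rewrite !mxE (negbTE kj) andbF mulr0.
move=> t; have := B_psd (y + t *: d).
rewrite linearD /= linearZ /= !mulmxDl !mulmxDr -!scalemxAl -!scalemxAr.
have := psd_form_sym d y; rewrite !mxE in y0 * => ->.
by rewrite y0; congr (0 <= _); ring.
Qed.

Lemma psd_null_restrict (x : 'rV[R]_m) (C : {set 'I_m}) :
  x *m B = 0 -> (forall i j, i \notin C -> j \in C -> x 0 i * B i j = 0) ->
  \row_i (if i \in C then x 0 i else 0) *m B = 0.
Proof.
set y := \row_i _ => xB0 C_sep; apply: psd_form_eq0.
have zBy0 : ((x - y) *m B *m y^T) 0 0 = 0.
  rewrite mxE big1 // => j _; rewrite !mxE.
  case: ifP => jC; last by rewrite mulr0.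
  rewrite big_distrl big1 // => i _ /=; rewrite !mxE.
  case: ifP => iC; first by rewrite subrr !mul0r.
  by rewrite subr0 C_sep ?iC // mul0r.
by rewrite -{1}[y](subKr x) mulmxBl xB0 sub0r mulNmx mxE zBy0 oppr0.
Qed.

End PsdMatrix.

Section PsdForcingBound.
Variables (R : realType) (T : finType) (e : rel T).
Hypothesis e_sym : symmetric e.
Local Notation N := #|T|.

Lemma white_rel_sym (Bs : {set T}) : symmetric (white_rel e Bs).
Proof.
by move=> x y; rewrite /white_rel e_sym; congr (_ && _); rewrite andbC.
Qed.

Lemma white_rel_closed (Bs : {set T}) : closed (white_rel e Bs) [predC Bs].
Proof. by move=> x y /and3P[_ xW yW]; rewrite !inE xW yW. Qed.

Lemma psd_pattern_row (B : 'M[R]_N) : psd_pattern_matrix e B ->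
  forall x : 'rV[R]_N, 0 <= (x *m B *m x^T) 0 0.
Proof. by case=> _ B_psd _ x; have := B_psd x^T; rewrite trmxK. Qed.

Lemma can_force_null_vector (B : 'M[R]_N) (x : 'rV[R]_N) (Bs : {set T}) u v :
  psd_pattern_matrix e B -> x *m B = 0 ->
  (forall i, enum_val i \in Bs -> x 0 i = 0) ->
  can_force e Bs u v -> x 0 (enum_rank v) = 0.
Proof.
move=> B_pp xB0 x0_blue /and4P[uBs euv vW /forallP v_only].
have [B_sym _ B_pat] := B_pp.
pose C : {set 'I_N} := [set i | connect (white_rel e Bs) v (enum_val i)].
have C_white i : i \in C -> enum_val i \notin Bs.
  by rewrite inE => /(closed_connect (@white_rel_closed Bs)); rewrite !inE vW.
have C_sep i j : i \notin C -> j \in C -> x 0 i * B i j = 0.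
  move=> iC jC; have [iBs|iW] := boolP (enum_val i \in Bs).
    by rewrite x0_blue ?mul0r.
  have [->|Bij] := eqVneq (B i j) 0; first by rewrite mulr0.
  have ij : i != j by apply: contraNneq iC => ->.
  move: Bij; rewrite B_pat // => eij; case/negP: iC; rewrite inE.
  have jW := C_white j jC; move: jC; rewrite inE => cvj.
  by apply: connect_trans cvj (connect1 _); rewrite /white_rel e_sym eij iW jW.
have /rowP/(_ (enum_rank u)) :=
  psd_null_restrict B_sym (psd_pattern_row B_pp) xB0 C_sep.
rewrite mxE (bigD1 (enum_rank v)) //=.
rewrite big1 => [|i iv]; last first.
  rewrite !mxE; case: ifP => iC; last by rewrite mul0r.
  have iu : i != enum_rank u.
    by apply: contraNneq (C_white _ iC) => ->; rewrite enum_rankK.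
  have [->|] := eqVneq (B i (enum_rank u)) 0; first by rewrite mulr0.
  rewrite B_pat // enum_rankK e_sym => eui.
  have := v_only (enum_val i); rewrite C_white // eui /=.
  have -> : enum_val i != v by apply: contraNneq iv => <-; rewrite enum_valK.
  move: iC; rewrite inE => cvi.
  by rewrite (sym_connect_sym (white_rel_sym Bs)) cvi.
rewrite !mxE inE enum_rankK connect0 addr0 => /eqP.
rewrite mulf_eq0 => /orP[/eqP //|/eqP Bvu0].
have vu : enum_rank v != enum_rank u by apply: contraNneq vW => /enum_rank_inj ->.
by move: (B_pat _ _ vu); rewrite Bvu0 eqxx !enum_rankK e_sym euv.
Qed.

Lemma derives_null_vector (B : 'M[R]_N) (x : 'rV[R]_N) (S Bs : {set T}) :
  psd_pattern_matrix e B -> x *m B = 0 ->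
  (forall i, enum_val i \in S -> x 0 i = 0) ->
  derives e S Bs -> forall i, enum_val i \in Bs -> x 0 i = 0.
Proof.
move=> B_pp xB0 x0_S; elim=> [//|Bs' u v _ IH uv] i.
case/setU1P => [iv|]; last exact: IH.
by rewrite -[i]enum_valK iv; apply: (can_force_null_vector B_pp xB0 IH uv).
Qed.

Lemma nullity_le_psd_forcing (B : 'M[R]_N) (S : {set T}) :
  psd_pattern_matrix e B -> psd_forcing_set e S -> (nullity B <= #|S|)%N.
Proof.
move=> B_pp S_forcing; rewrite leqNgt; apply/negP => S_small.
(* Otherwise [B | P], with P selecting the coordinates in S, has a nonzero left
   kernel vector: a null vector of B vanishing on S. *)
pose P : 'M[R]_(N, #|S|) :=
  \matrix_(i, k) (i == enum_rank (@enum_val T (mem S) k))%:R.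
pose M := row_mx B P.
have rankM : (\rank M < N)%N.
  rewrite -mxrank_tr /M tr_row_mx -addsmxE.
  apply: leq_ltn_trans (mxrank_adds_leqif _ _).1 _.
  rewrite !mxrank_tr; have := rank_leq_col P; have := rank_leq_row B.
  by move: S_small; rewrite /nullity; lia.
have /rowV0Pn[x /sub_kermxP xM0 x_neq0] : kermx M != 0.
  by rewrite -mxrank_eq0 mxrank_ker subn_eq0 -ltnNge.
move: xM0; rewrite mul_mx_row -(row_mx0 _ 1 N #|S|) => /eq_row_mx[xB0 xP0].
have x0_S i : enum_val i \in S -> x 0 i = 0.
  move=> iS; pose k := enum_rank_in iS (enum_val i).
  have : (x *m P) 0 k = 0 by rewrite xP0 mxE.
  rewrite mxE (bigD1 i) //= big1 ?addr0 => [|j ji].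
    by rewrite !mxE /k enum_rankK_in // enum_valK eqxx mulr1.
  by rewrite !mxE /k enum_rankK_in // enum_valK (negbTE ji) mulr0.
case/eqP: x_neq0; apply/rowP => i; rewrite mxE.
by apply: (derives_null_vector B_pp xB0 x0_S S_forcing); rewrite inE.
Qed.

End PsdForcingBound.

Lemma Zplus_Mplus_eq_card (R : realType) (T : finType) (e : rel T)
    (S : {set T}) (B : 'M[R]_#|T|) :
  symmetric e -> psd_forcing_set e S -> psd_pattern_matrix e B ->
  (#|S| <= nullity B)%N -> Zplus e = #|S| /\ Mplus e R = #|S|.
Proof.
move=> e_sym S_forcing B_pp S_le.
have B_null : nullity B = #|S|.
  apply/eqP; rewrite eqn_leq S_le.
  by rewrite (nullity_le_psd_forcing e_sym B_pp S_forcing).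
split; apply/eqP; rewrite eqn_leq; apply/andP; split.
- rewrite /Zplus -minEnat -leEnat; apply: bigmin_le_cond; exact/asboolP.
- apply: (big_ind (fun k => #|S| <= k)%N) => [|a b|S' /asboolP S'_forcing].
  + exact: max_card.
  + by rewrite leq_min => -> ->.
  + by rewrite -B_null (nullity_le_psd_forcing e_sym B_pp S'_forcing).
- apply/bigmax_leqP => k /asboolP[B' [B'_pp <-]].
  exact: (nullity_le_psd_forcing e_sym B'_pp S_forcing).
- have S_lt : (#|S| < #|T|.+1)%N by rewrite ltnS max_card.
  apply: (bigop.bigmax_sup (inord #|S|)); rewrite ?inordK //.
  by apply/asboolP; exists B.
Qed.

Section PsdForcingSets.
Variables (T : finType) (e : rel T).

Lemma psd_forcing_of_progress (S : {set T}) :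
  (forall Bs v, derives e S Bs -> v \notin Bs ->
     exists u w, can_force e Bs u w) ->
  psd_forcing_set e S.
Proof.
move=> progress.
suff grow k Bs : (#|~: Bs| < k)%N -> derives e S Bs -> derives e S setT.
  by apply: (grow #|T|.+1); [rewrite ltnS max_card | constructor].
elim: k Bs => // k IH Bs Bs_lt dBs.
have [Bs_full|[v]] := set_0Vmem (~: Bs); first by rewrite -setC0 -Bs_full setCK.
rewrite inE => vW; have [u [w uw]] := progress Bs v dBs vW.
apply: IH (derives_step dBs uw).
have wW : w \notin Bs by case/and4P: uw.
have := cardsC Bs; have := cardsC (w |: Bs); rewrite cardsU1 wW /=.
by move: Bs_lt; lia.
Qed.

Lemma can_force_of_closed (Bs : {set T}) (P : {pred T}) u v :
  closed (white_rel e Bs) P -> u \in Bs -> e u v -> v \notin Bs ->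
  (forall w, w \notin Bs -> e u w -> w != v -> (w \in P) != (v \in P)) ->
  can_force e Bs u v.
Proof.
move=> P_closed uBs euv vW sep; apply/and4P; split => //.
apply/forallP => w; apply/implyP => /and3P[wW euw wv]; apply/negP.
move=> /(closed_connect P_closed) wv_P.
by move: (sep w wW euw wv); rewrite wv_P eqxx.
Qed.

Lemma derives_sub (S Bs : {set T}) : derives e S Bs -> S \subset Bs.
Proof. by elim=> // Bs' u v _ sub _; apply: subset_trans sub (subsetUr _ _). Qed.

End PsdForcingSets.

Section KrKrForcing.
Variable n : nat.
Local Notation r := n.+2.
Local Notation V := ('I_r * 'I_r)%type.

Lemma KrKr_sym : symmetric (KrKr r).
Proof.
move=> x y; rewrite /KrKr /cart_prod /complete_graph.
by rewrite !(eq_sym y.1) !(eq_sym y.2).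
Qed.

Lemma ord_max_neq0 : (ord_max == ord0 :> 'I_r) = false.
Proof. by []. Qed.

Definition KrKr_forcing : {set V} := (ord0, ord0) |: setX [set~ ord0] [set~ ord0].

Lemma card_KrKr_forcing : #|KrKr_forcing| = (n.+1 ^ 2 + 1)%N.
Proof. by rewrite cardsU1 cardsX cardsC1 card_ord !inE eqxx addnC mulnn. Qed.

Lemma notin_KrKr_forcing (x : V) :
  x \notin KrKr_forcing -> (x.1 == ord0) = (x.2 != ord0).
Proof.
case: x => a b; rewrite !inE xpair_eqE /=.
by case: (a == ord0); case: (b == ord0).
Qed.

Lemma white_KrKr_closed (Bs : {set V}) : KrKr_forcing \subset Bs ->
  closed (white_rel (KrKr r) Bs) [pred x : V | x.1 == ord0].
Proof.
move=> sub x y /and3P[exy xW yW]; rewrite !inE.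
case/orP: exy => /andP[/eqP xy _]; first by rewrite xy.
have xS : x \notin KrKr_forcing by apply: contra xW; apply: subsetP.
have yS : y \notin KrKr_forcing by apply: contra yW; apply: subsetP.
by rewrite (notin_KrKr_forcing xS) (notin_KrKr_forcing yS) xy.
Qed.

Lemma KrKr_progress (Bs : {set V}) v : KrKr_forcing \subset Bs -> v \notin Bs ->
  exists u, can_force (KrKr r) Bs u v.
Proof.
move=> sub vW; have closed0 := white_KrKr_closed sub.
have white_row0 w : w \notin Bs -> (w.1 == ord0) = (w.2 != ord0).
  by move=> wW; apply: notin_KrKr_forcing; apply: contra wW; apply: subsetP.
have := white_row0 v vW; case: v vW => a b vW /= ab.
have [a0|a_neq0] := eqVneq a ord0.
- have b_neq0 : b != ord0 by rewrite -ab a0.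
  exists (ord_max, b); apply: (can_force_of_closed closed0) => //.
  + by apply: (subsetP sub); rewrite !inE b_neq0.
  + by rewrite /KrKr /cart_prod /complete_graph /= eqxx a0.
  move=> [w1 w2] wW; rewrite /KrKr /cart_prod /complete_graph !inE /= a0 eqxx.
  case/orP => /andP[/eqP <- _] wv; first by rewrite ord_max_neq0.
  by apply: contraNneq wv => /eqP ->.
- have b0 : b = ord0 by move: ab; rewrite (negbTE a_neq0) => /esym/negbFE/eqP.
  exists (a, ord_max); apply: (can_force_of_closed closed0) => //.
  + by apply: (subsetP sub); rewrite !inE a_neq0 ord_max_neq0 /= orbT.
  + by rewrite /KrKr /cart_prod /complete_graph /= b0 ord_max_neq0 eqxx.
  move=> [w1 w2] wW; have /= w_row0 := white_row0 _ wW.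
  rewrite /KrKr /cart_prod /complete_graph !inE /= (negbTE a_neq0).
  case/orP => /andP[/eqP eq_w _] wv; rewrite -eq_w in w_row0 wv *.
  + move: w_row0; rewrite (negbTE a_neq0) => /esym/negbFE/eqP w20.
    by rewrite w20 b0 eqxx in wv.
  + by rewrite w_row0 ord_max_neq0.
Qed.

Lemma KrKr_forcingP : psd_forcing_set (KrKr r) KrKr_forcing.
Proof.
apply: psd_forcing_of_progress => Bs v dBs vW.
by have [u uv] := KrKr_progress (derives_sub dBs) vW; exists u, v.
Qed.

End KrKrForcing.

Section KrKrGram.
Variables (R : realType) (n : nat).
Local Notation r := n.+2.
Local Notation V := ('I_r * 'I_r)%type.

Definition unit_coord (i : 'I_r) (k : 'I_n.+1) : R := (i == lift ord0 k)%:R.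
Definition on_border (u : V) : R := ((u.1 == ord0) || (u.2 == ord0))%:R.
Definition border_weight (u : V) : R := if u.1 == ord0 then 2 * n%:R + 3 else 1.

(* Vertex (i, j) is sent to (c 1 + e_i, - c 1 + d e_j) in R^(r-1) x R^(r-1),
   where e_0 = 0, and c = 1 on row 0 and column 0, c = 0 elsewhere: being
   orthogonal to the vectors (e_i', e_j') of the inner vertices forces this
   shape.  The weight d = 2n + 3 on row 0 makes (i, 0) orthogonal to (0, j). *)
Definition gram_left (u : V) k := on_border u + unit_coord u.1 k.
Definition gram_right (u : V) k :=
  - on_border u + border_weight u * unit_coord u.2 k.

Definition gram (u w : V) :=
  \sum_k gram_left u k * gram_left w k + \sum_k gram_right u k * gram_right w k.

Lemma sum_unit_coord i : \sum_k unit_coord i k = (i != ord0)%:R.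
Proof.
case: (unliftP ord0 i) => [j ->|->]; last first.
  by rewrite eqxx big1 // => k _; rewrite /unit_coord (negbTE (neq_lift _ _)).
rewrite (bigD1 j) //= /unit_coord eqxx big1 ?addr0 ?neq_lift // => k kj.
by rewrite (inj_eq (@lift_inj _ ord0)) eq_sym (negbTE kj).
Qed.

Lemma sum_unit_coordM i i' :
  \sum_k unit_coord i k * unit_coord i' k = ((i == i') && (i != ord0))%:R.
Proof.
have [<-|ii'] := eqVneq i i'.
  by rewrite -sum_unit_coord; apply: eq_bigr => k _; rewrite -natrM mulnb andbb.
rewrite big1 // => k _; rewrite /unit_coord -natrM mulnb.
case: (eqVneq i (lift ord0 k)) => [i_k|//].
by rewrite -i_k eq_sym (negbTE ii').
Qed.

Lemma sum_affine_unit_coord c x c' x' i i' :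
  \sum_k (c + x * unit_coord i k) * (c' + x' * unit_coord i' k) =
  (n%:R + 1) * c * c' + c * x' * (i' != ord0)%:R + x * c' * (i != ord0)%:R
  + x * x' * ((i == i') && (i != ord0))%:R.
Proof.
have -> : \sum_k (c + x * unit_coord i k) * (c' + x' * unit_coord i' k) =
    \sum_(k < n.+1) (c * c') + (c * x') * \sum_k unit_coord i' k
    + (x * c') * \sum_k unit_coord i k
    + (x * x') * \sum_k unit_coord i k * unit_coord i' k.
  by rewrite !mulr_sumr -!big_split /=; apply: eq_bigr => k _; ring.
rewrite !sum_unit_coord sum_unit_coordM sumr_const card_ord.
by rewrite -[(c * c') *+ _]mulr_natl -natr1; ring.
Qed.

Lemma gramE u w : gram u w =
  2 * (n%:R + 1) * on_border u * on_border w
  + on_border u * (w.1 != ord0)%:R + on_border w * (u.1 != ord0)%:R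
  + ((u.1 == w.1) && (u.1 != ord0))%:R
  - on_border u * border_weight w * (w.2 != ord0)%:R
  - border_weight u * on_border w * (u.2 != ord0)%:R
  + border_weight u * border_weight w * ((u.2 == w.2) && (u.2 != ord0))%:R.
Proof.
rewrite /gram /gram_left /gram_right.
under [X in X + _]eq_bigr => k _ do
  rewrite -[unit_coord u.1 k]mul1r -[unit_coord w.1 k]mul1r.
by rewrite !sum_affine_unit_coord; ring.
Qed.

Lemma gram_pattern u w : u != w -> (gram u w != 0) = KrKr r u w.
Proof.
case: u w => [i j] [i' j']; rewrite xpair_eqE gramE /on_border /border_weight.
rewrite /KrKr /cart_prod /complete_graph /=.
have n_ge0 : 0 <= n%:R :> R by [].
have eq0_compat (a b : 'I_r) : (a == b) ==> ((a == ord0) == (b == ord0)).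
  by apply/implyP => /eqP->.
have eq0_trans (a b : 'I_r) : (a == ord0) ==> (b == ord0) ==> (a == b).
  by apply/implyP => /eqP->; apply/implyP => /eqP->.
move: (eq0_compat i i') (eq0_trans i i') (eq0_compat j j') (eq0_trans j j').
case: (i == i'); case: (i == ord0); case: (i' == ord0);
case: (j == j'); case: (j == ord0); case: (j' == ord0) => //= _ _ _ _ _;
rewrite ?mulr1n ?mulr0n ?mulr1 ?mul1r ?mulr0 ?mul0r ?addr0 ?add0r ?subr0;
by [apply/eqP; lra | apply/eqP; nra].
Qed.

Definition gram_factor : 'M[R]_(#|{: V}|, n.+1 + n.+1) :=
  row_mx (\matrix_(i, k) gram_left (enum_val i) k)
         (\matrix_(i, k) gram_right (enum_val i) k).

Definition gram_mx := gram_factor *m gram_factor^T.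

Lemma gram_mxE i j : gram_mx i j = gram (enum_val i) (enum_val j).
Proof.
rewrite mxE big_split_ord /=; congr (_ + _); apply: eq_bigr => k _.
  by rewrite !mxE (unsplitK (inl k : 'I_n.+1 + 'I_n.+1)) !mxE.
by rewrite !mxE (unsplitK (inr k : 'I_n.+1 + 'I_n.+1)) !mxE.
Qed.

Lemma gram_mx_psd_pattern : psd_pattern_matrix (KrKr r) gram_mx.
Proof.
split=> [|x|i j ij]; first by rewrite /gram_mx trmx_mul trmxK.
- have -> : x^T *m gram_mx *m x = (gram_factor^T *m x)^T *m (gram_factor^T *m x).
    by rewrite /gram_mx trmx_mul trmxK !mulmxA.
  by rewrite mxE; apply: sumr_ge0 => k _; rewrite mxE -expr2 sqr_ge0.
- by rewrite gram_mxE gram_pattern // (inj_eq enum_val_inj).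
Qed.

Lemma rank_gram_mx : (\rank gram_mx <= n.+1 + n.+1)%N.
Proof. exact: leq_trans (mxrankM_maxl _ _) (rank_leq_col _). Qed.

End KrKrGram.

Local Close Scope ring_scope.

Theorem lemma3p4 (R : realType) (r : nat) (hr : 2 <= r) :
  Zplus (KrKr r) = (r - 1) ^ 2 + 1 /\ Mplus (KrKr r) R = (r - 1) ^ 2 + 1.
Proof.
case: r hr => [|[|n]] // _; rewrite subn1 /= -card_KrKr_forcing.
apply: Zplus_Mplus_eq_card (@KrKr_sym n) (KrKr_forcingP n)
  (gram_mx_psd_pattern R n) _.
have := rank_gram_mx R n; rewrite /nullity card_KrKr_forcing.
by move: (\rank _) => rk; rewrite card_prod card_ord; lia.
Qed.
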